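(* Let $\mathsf{X}$ be a complex random variable with $\mathbb{E}[|\mathsf{X}|^2]=1$, let $L\ge1$, and let $x_1,\dots,x_L$ be i.i.d. copies of $\mathsf{X}$. Assume there is a constant $\delta>0$ with $|x_\ell|^2\ge\delta$ almost surely for all $\ell$. Let $P>0$, $\sigma_{\mathrm s}^2>0$, and define the average conditional CRB $$\overline{\mathrm{CRB}}_{h_{\mathrm s}}=\frac{\sigma_{\mathrm s}^2}{P}\,\mathbb{E}\!\left[\frac{1}{\sum_{\ell=1}^L|x_\ell|^2}\right].$$ Then $$\overline{\mathrm{CRB}}_{h_{\mathrm s}}\le\frac{\sigma_{\mathrm s}^2}{P}\left[\frac1L+\frac{\mathrm{Var}(|\mathsf{X}|^2)}{L^2\delta}\right].$$
   Context: In the sensing model $\boldsymbol y_{\mathrm s}=\sqrt{P}h_{\mathrm s}\boldsymbol x+\boldsymbol z_{\mathrm s}$ with noise $\mathcal{CN}(\boldsymbol 0,\sigma_{\mathrm s}^2\boldsymbol I_L)$, the conditional CRB for estimating $h_{\mathrm s}$ given $\boldsymbol x=(x_1,\dots,x_L)$ is $\sigma_{\mathrm s}^2/(P\|\boldsymbol x\|^2)$, and the average conditional CRB is its expectation over $\boldsymbol x$, as defined in the claim. The symbols are normalized so that $\mathbb{E}[|\mathsf{X}|^2]=1$. *)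

From HB Require Import structures.
From mathcomp Require Import all_boot all_order all_algebra.
From mathcomp Require Import all_classical all_reals all_analysis.
From mathcomp Require Import complex.
Set Implicit Arguments. Unset Strict Implicit. Unset Printing Implicit Defensive.
Import Order.TTheory GRing.Theory Num.Theory.
Local Open Scope classical_set_scope.
Local Open Scope ring_scope.

Section Defs.
Context (R : realType) (d : measure_display) (T : measurableType d).
Variable (P : probability T R).

Definition cmeasurable (Z : T -> R[i]) : Prop :=
  measurable_fun setT (fun t => complex.Re (Z t)) /\ measurable_fun setT (fun t => complex.Im (Z t)).

Definition cevent (Z : T -> R[i]) (A B : set R) : set T :=
  [set t | A (complex.Re (Z t)) /\ B (complex.Im (Z t))].

(* Z1 and Z2 have the same distribution (on Borel rectangles, a generating
   pi-system of the Borel sigma-algebra of C = R^2) *)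
Definition same_distribution (Z1 Z2 : T -> R[i]) : Prop :=
  forall A B : set R, measurable A -> measurable B ->
    P (cevent Z1 A B) = P (cevent Z2 A B).

Definition mutually_independent (L : nat) (x : 'I_L -> T -> R[i]) : Prop :=
  forall (J : {set 'I_L}) (A B : 'I_L -> set R),
    (forall l, measurable (A l) /\ measurable (B l)) ->
    P (\big[setI/setT]_(l in J) cevent (x l) (A l) (B l))
    = (\prod_(l in J) P (cevent (x l) (A l) (B l)))%E.

Definition crb_cond (L : nat) (Pw sigma2 : R) (x : 'I_L -> T -> R[i]) (t : T) : R :=
  sigma2 / (Pw * \sum_(l < L) ComplexField.Normc.normc (x l t) ^+ 2).

Definition avg_crb (L : nat) (Pw sigma2 : R) (x : 'I_L -> T -> R[i]) : \bar R :=
  expectation P (crb_cond Pw sigma2 x).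

End Defs.

From HB Require Import structures.
From mathcomp Require Import all_boot all_order all_algebra.
From mathcomp Require Import all_classical all_reals all_analysis.
From mathcomp Require Import complex.
From mathcomp Require Import measurable_realfun.
From mathcomp Require Import ring.
Set Implicit Arguments. Unset Strict Implicit. Unset Printing Implicit Defensive.
Import Order.TTheory GRing.Theory Num.Theory.
Local Open Scope classical_set_scope.
Local Open Scope ring_scope.

(* Write S = sum_l |x_l|^2.  Since 1/S + S/L^2 = 2/L + (S - L)^2 / (L^2 S) and
   S >= L delta almost surely, E[1/S] + E[S]/L^2 <= 2/L + E[(S - L)^2] / (L^3 delta).
   The |x_l|^2 are i.i.d. with mean 1, so E[S] = L and E[(S - L)^2] = L Var(|X|^2),
   hence E[1/S] <= 1/L + Var(|X|^2) / (L^2 delta).  Independence enters only through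
   E[|x_i|^2 |x_j|^2] = 1 for i <> j; as it is only assumed on Borel rectangles, both
   factors are expanded into squared real and imaginary parts, which are pairwise
   independent. *)

Section nonnegative_integrals.
Context (R : realType) (d : measure_display) (T : measurableType d).
Variable P : probability T R.
Local Open Scope ereal_scope.

Lemma ge0_integralD_EFin (f g : T -> R) :
  measurable_fun setT f -> measurable_fun setT g ->
  (forall t, (0 <= f t)%R) -> (forall t, (0 <= g t)%R) ->
  \int[P]_t (f t + g t)%:E = \int[P]_t (f t)%:E + \int[P]_t (g t)%:E.
Proof.
move=> mf mg f0 g0; under eq_integral do rewrite EFinD.
by apply: ge0_integralD => //; first [exact/measurable_EFinP | move=> t _; rewrite lee_fin].
Qed.

Lemma ge0_integralZl_EFinM (k : R) (f : T -> R) : (0 <= k)%R ->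
  measurable_fun setT f -> (forall t, (0 <= f t)%R) ->
  \int[P]_t (k * f t)%:E = k%:E * \int[P]_t (f t)%:E.
Proof.
move=> k0 mf f0; under eq_integral do rewrite EFinM.
by apply: ge0_integralZl_EFin => //; [move=> t _; rewrite lee_fin|exact/measurable_EFinP].
Qed.

Lemma ge0_integral_sum_EFin (I : Type) (s : seq I) (f : I -> T -> R) :
  (forall i, measurable_fun setT (f i)) -> (forall i t, (0 <= f i t)%R) ->
  \int[P]_t (\sum_(i <- s) f i t)%:E = \sum_(i <- s) \int[P]_t (f i t)%:E.
Proof.
move=> mf f0; under eq_integral do rewrite -sumEFin.
by apply: ge0_integral_sum => // [i|i t _]; [exact/measurable_EFinP|rewrite lee_fin].
Qed.

Lemma integral_cst_probability (c : R) : \int[P]_t c%:E = c%:E.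
Proof. by have := expectation_cst P c; rewrite unlock. Qed.

Lemma ge0_integral_sqr_centered (f : T -> R) (c : R) :
  measurable_fun setT f -> (forall t, (0 <= f t)%R) -> (0 <= c)%R ->
  \int[P]_t (f t)%:E = c%:E ->
  \int[P]_t (f t ^+ 2)%:E = \int[P]_t ((f t - c) ^+ 2)%:E + (c ^+ 2)%:E.
Proof.
move=> mf f0 c0 Ef.
have mfc : measurable_fun setT (fun t => (f t - c) ^+ 2)%R.
  by apply/measurable_funX/measurable_funB => //; exact: measurable_cst.
have expand : \int[P]_t ((f t - c) ^+ 2 + 2 * c * f t)%:E =
              \int[P]_t (f t ^+ 2 + c ^+ 2)%:E.
  by apply: eq_integral => t _; congr EFin; ring.
have mcf : measurable_fun setT (fun t => 2 * c * f t)%R.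
  by apply: measurable_funM => //; exact: measurable_cst.
have cf0 t : (0 <= 2 * c * f t)%R by rewrite !mulr_ge0.
rewrite (ge0_integralD_EFin mfc mcf (fun t => sqr_ge0 _) cf0) in expand.
rewrite (ge0_integralD_EFin (measurable_funX 2 mf) (measurable_cst _)
  (fun t => sqr_ge0 _) (fun _ => sqr_ge0 c)) in expand.
rewrite ge0_integralZl_EFinM ?mulr_ge0 // Ef integral_cst_probability in expand.
rewrite -[LHS](@addeK _ (c ^+ 2)%:E) // -expand -EFinM.
by rewrite (_ : 2 * c * c = c ^+ 2 + c ^+ 2)%R ?EFinD ?addeA ?addeK //; ring.
Qed.

Lemma variance_integral (f : T -> R) (c : R) :
  expectation P f = c%:E -> variance P f = \int[P]_t ((f t - c) ^+ 2)%:E.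
Proof.
move=> Ef; rewrite /variance unlock Ef /= unlock.
by apply: eq_integral => t _; rewrite expr2.
Qed.

Lemma integral_pair_law (W1 W2 : T -> R * R) :
  measurable_fun setT W1 -> measurable_fun setT W2 ->
  (forall A B, measurable A -> measurable B ->
     P (W1 @^-1` (A `*` B)) = P (W2 @^-1` (A `*` B))) ->
  forall F : R * R -> \bar R, measurable_fun setT F -> (forall z, 0 <= F z) ->
  \int[P]_t F (W1 t) = \int[P]_t F (W2 t).
Proof.
move=> mW1 mW2 W12 F mF F0.
have E1 := ge0_integral_pushforward mW1 P measurableT mF (fun z _ => F0 z).
have E2 := ge0_integral_pushforward mW2 P measurableT mF (fun z _ => F0 z).
rewrite preimage_setT in E1 E2; rewrite -E1 -E2.
apply: eq_measure_integral => A mA _.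
apply: (measure_unique [set A `*` B | A in measurable & B in measurable] (fun _ => setT)).
- exact: measurable_prod_measurableType.
- move=> _ _ [A1 mA1 [B1 mB1 <-]] [A2 mA2 [B2 mB2 <-]].
  exists (A1 `&` A2); first exact: measurableI.
  by exists (B1 `&` B2); [exact: measurableI|rewrite setXI].
- by move=> _; exists setT => //; exists setT => //; rewrite setXTT.
- by apply/seteqP; split => // z _; exists 0%N.
- by move=> _ [A1 mA1 [B1 mB1 <-]]; exact: W12.
- by move=> _ /=; rewrite /pushforward /= preimage_setT probability_setT ltry.
- exact: mA.
Qed.

Lemma integral_indep_mul (U V : T -> R) :
  measurable_fun setT U -> measurable_fun setT V ->
  (forall A B, measurable A -> measurable B ->
     P (U @^-1` A `&` V @^-1` B) = P (U @^-1` A) * P (V @^-1` B)) ->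
  forall f g : R -> R, measurable_fun setT f -> measurable_fun setT g ->
  (forall r, (0 <= f r)%R) -> (forall r, (0 <= g r)%R) ->
  \int[P]_t (f (U t) * g (V t))%:E = \int[P]_t (f (U t))%:E * \int[P]_t (g (V t))%:E.
Proof.
move=> mU mV UV f g mf mg f0 g0.
pose U' : {mfun T >-> R} := HB.pack U (isMeasurableFun.Build _ _ _ _ U mU).
pose V' : {mfun T >-> R} := HB.pack V (isMeasurableFun.Build _ _ _ _ V mV).
have mUV : measurable_fun setT (fun t => (U t, V t)) by exact: measurable_fun_pair.
pose F z := (f z.1 * g z.2)%:E.
have mF : measurable_fun setT F.
  apply/measurable_EFinP; apply: measurable_funM.
  - exact: measurableT_comp mf measurable_fst.
  - exact: measurableT_comp mg measurable_snd.
have F0 z : 0 <= F z by rewrite lee_fin mulr_ge0.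
have E := ge0_integral_pushforward mUV P measurableT mF (fun z _ => F0 z).
rewrite preimage_setT in E.
rewrite -[LHS]/(\int[P]_t F (U t, V t)) -E.
have law_UV : forall A, measurable A ->
    pushforward P (fun t => (U t, V t)) A = (distribution P U' \x distribution P V') A.
  by move=> A mA; apply/esym/product_measure_unique.
rewrite (eq_measure_integral (m1 := pushforward P (fun t => (U t, V t)))
  (distribution P U' \x distribution P V')); last by move=> A mA _; exact: law_UV.
rewrite fubini_tonelli1 //.
rewrite /fubini_F /F /=.
under eq_integral => u _.
  under eq_integral do rewrite EFinM.
  rewrite ge0_integralZl_EFin //; last 2 first.
  - by move=> y _; rewrite lee_fin.
  - exact/measurable_EFinP.
  over.
rewrite /= ge0_integralZr //; last 3 first.
- exact/measurable_EFinP.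
- by move=> y _; rewrite lee_fin.
- by apply: integral_ge0 => y _; rewrite lee_fin.
rewrite (ge0_integral_distribution U' (f := fun r => (f r)%:E)) //; last exact/measurable_EFinP.
rewrite (ge0_integral_distribution V' (f := fun r => (g r)%:E)) //.
exact/measurable_EFinP.
Qed.

End nonnegative_integrals.

Lemma measurable_invr (R : realType) : measurable_fun [set: R] (fun r : R => r^-1).
Proof.
have -> : [set: R] = [set r | r != 0] `|` [set 0].
  by apply/seteqP; split => // r _; case: (eqVneq r 0) => [->|?]; [right|left].
apply/measurable_funU; [exact: open_measurable (@open_neq R 0)|exact: measurable_set1|].
split; last exact: measurable_fun_set1.
apply: open_continuous_measurable_fun; first exact: open_neq.
by move=> r; rewrite inE => /inv_continuous.
Qed.

Definition ccoord (R : Type) (b : bool) (z : R[i]) : R :=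
  if b then complex.Re z else complex.Im z.

Lemma normc_sqr (R : rcfType) (z : R[i]) :
  ComplexField.Normc.normc z ^+ 2 = complex.Re z ^+ 2 + complex.Im z ^+ 2.
Proof. by case: z => a b /=; rewrite sqr_sqrtr // addr_ge0 // sqr_ge0. Qed.

Lemma normc_sqr_ccoord (R : rcfType) (z : R[i]) :
  ComplexField.Normc.normc z ^+ 2 = \sum_(b : bool) ccoord b z ^+ 2.
Proof. by rewrite big_bool normc_sqr. Qed.

Definition sqnorm (T : Type) (R : rcfType) (L : nat) (x : 'I_L -> T -> R[i]) (t : T) : R :=
  \sum_(l < L) ComplexField.Normc.normc (x l t) ^+ 2.

Lemma sqnorm_ge0 (T : Type) (R : rcfType) (L : nat) (x : 'I_L -> T -> R[i]) (t : T) :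
  0 <= sqnorm x t.
Proof. by apply: sumr_ge0 => l _; exact: sqr_ge0. Qed.

Section complex_random_variables.
Context (R : realType) (d : measure_display) (T : measurableType d).
Variable P : probability T R.
Local Open Scope ereal_scope.

Lemma measurable_ccoord (Z : T -> R[i]) (b : bool) :
  cmeasurable Z -> measurable_fun setT (ccoord b \o Z).
Proof. by case: b => -[]. Qed.

Lemma measurable_normc_sqr (Z : T -> R[i]) :
  cmeasurable Z -> measurable_fun setT (fun t => ComplexField.Normc.normc (Z t) ^+ 2)%R.
Proof.
move=> [mRe mIm]; under eq_fun do rewrite normc_sqr.
by apply: measurable_funD; exact: measurable_funX.
Qed.

Lemma measurable_sqnorm (L : nat) (x : 'I_L -> T -> R[i]) :
  (forall l, cmeasurable (x l)) -> measurable_fun setT (sqnorm x).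
Proof. by move=> mx; apply: measurable_sum => l; exact: measurable_normc_sqr. Qed.

Lemma measurable_inv_sqnorm (L : nat) (x : 'I_L -> T -> R[i]) :
  (forall l, cmeasurable (x l)) -> measurable_fun setT (fun t => (sqnorm x t)^-1)%R.
Proof. by move=> mx; exact: measurableT_comp (@measurable_invr R) (measurable_sqnorm mx). Qed.

Lemma preimage_ccoord (Z : T -> R[i]) (b : bool) (A : set R) :
  (ccoord b \o Z) @^-1` A =
  cevent Z (if b then A else setT) (if b then setT else A).
Proof. by apply/seteqP; split => t /=; case: b => //= -[]. Qed.

Lemma mutually_independent2 (L : nat) (x : 'I_L -> T -> R[i]) (i j : 'I_L)
    (Ai Bi Aj Bj : set R) :
  mutually_independent P x -> i != j ->
  measurable Ai -> measurable Bi -> measurable Aj -> measurable Bj ->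
  P (cevent (x i) Ai Bi `&` cevent (x j) Aj Bj) =
  P (cevent (x i) Ai Bi) * P (cevent (x j) Aj Bj).
Proof.
move=> indep ij mAi mBi mAj mBj.
have := indep [set i; j]%SET (fun l => if l == i then Ai else Aj)
  (fun l => if l == i then Bi else Bj).
have i_notin_j : i \notin [set j]%SET by rewrite inE.
rewrite big_setU1 // big_set1 big_setU1 // big_set1 /= eqxx eq_sym (negbTE ij).
by apply=> l; case: (l == i).
Qed.

Lemma integral_ccoord_sqr_indep (L : nat) (x : 'I_L -> T -> R[i]) (i j : 'I_L)
    (b b' : bool) :
  (forall l, cmeasurable (x l)) -> mutually_independent P x -> i != j ->
  \int[P]_t (ccoord b (x i t) ^+ 2 * ccoord b' (x j t) ^+ 2)%:E =
  \int[P]_t (ccoord b (x i t) ^+ 2)%:E * \int[P]_t (ccoord b' (x j t) ^+ 2)%:E.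
Proof.
move=> mx indep ij.
have indep_coords A B : measurable A -> measurable B ->
    P ((ccoord b \o x i) @^-1` A `&` (ccoord b' \o x j) @^-1` B) =
    P ((ccoord b \o x i) @^-1` A) * P ((ccoord b' \o x j) @^-1` B).
  move=> mA mB; rewrite !preimage_ccoord.
  by apply: mutually_independent2 => //; case: ifP.
exact: (integral_indep_mul (measurable_ccoord b (mx i)) (measurable_ccoord b' (mx j))
  indep_coords (exprn_measurable 2) (exprn_measurable 2) (@sqr_ge0 _) (@sqr_ge0 _)).
Qed.

Lemma integral_normc_sqr_indep (L : nat) (x : 'I_L -> T -> R[i]) (i j : 'I_L) :
  (forall l, cmeasurable (x l)) -> mutually_independent P x -> i != j ->
  \int[P]_t (ComplexField.Normc.normc (x i t) ^+ 2 *
             ComplexField.Normc.normc (x j t) ^+ 2)%:E =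
  \int[P]_t (ComplexField.Normc.normc (x i t) ^+ 2)%:E *
  \int[P]_t (ComplexField.Normc.normc (x j t) ^+ 2)%:E.
Proof.
move=> mx indep ij.
have mc l b : measurable_fun setT (fun t => ccoord b (x l t) ^+ 2)%R.
  exact/measurable_funX/measurable_ccoord.
have c0 b (z : R[i]) : (0 <= ccoord b z ^+ 2)%R by exact: sqr_ge0.
have int0 (f : T -> R) : 0 <= \int[P]_t (f t ^+ 2)%:E.
  by apply: integral_ge0 => t _; rewrite lee_fin sqr_ge0.
have int_sum l : \int[P]_t (ComplexField.Normc.normc (x l t) ^+ 2)%:E =
                 \sum_b \int[P]_t (ccoord b (x l t) ^+ 2)%:E.
  by under eq_integral do rewrite normc_sqr_ccoord; exact: ge0_integral_sum_EFin.
rewrite !int_sum ge0_sume_distrl => [|b _]; last exact: int0.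
under eq_integral do rewrite !normc_sqr_ccoord mulr_suml.
rewrite ge0_integral_sum_EFin => [|b|b t]; first last.
- by rewrite mulr_ge0 ?sumr_ge0.
- exact/measurable_funM/measurable_sum.
apply: eq_bigr => b _; under eq_integral do rewrite mulr_sumr.
rewrite ge0_integral_sum_EFin => [|b'|b' t]; first last.
- by rewrite mulr_ge0.
- exact: measurable_funM.
rewrite ge0_sume_distrr => [|b' _]; last exact: int0.
by apply: eq_bigr => b' _; exact: integral_ccoord_sqr_indep.
Qed.

Lemma same_distribution_integral_normc_sqr (Z X : T -> R[i]) (f : R -> R) :
  cmeasurable Z -> cmeasurable X -> same_distribution P Z X ->
  measurable_fun setT f -> (forall r, (0 <= r -> 0 <= f r)%R) ->
  \int[P]_t (f (ComplexField.Normc.normc (Z t) ^+ 2))%:E =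
  \int[P]_t (f (ComplexField.Normc.normc (X t) ^+ 2))%:E.
Proof.
move=> [mReZ mImZ] [mReX mImX] ZX mf f0.
pose F (z : R * R) := (f (z.1 ^+ 2 + z.2 ^+ 2))%:E.
have mF : measurable_fun setT F.
  apply/measurable_EFinP/(measurableT_comp mf).
  by apply: measurable_funD; apply: measurable_funX; [exact: measurable_fst|exact: measurable_snd].
have F0 z : 0 <= F z by rewrite lee_fin f0 // addr_ge0 ?sqr_ge0.
under eq_integral do rewrite normc_sqr.
under [RHS]eq_integral do rewrite normc_sqr.
(* [cevent Z A B] is the preimage of [A `*` B] under [t |-> (Re (Z t), Im (Z t))]. *)
exact: (integral_pair_law (measurable_fun_pair mReZ mImZ) (measurable_fun_pair mReX mImX)
  ZX mF F0).
Qed.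

End complex_random_variables.

Lemma invf_add_div_sqr_le (R : realFieldType) (s l delta : R) :
  0 < l -> 0 < delta -> l * delta <= s ->
  s^-1 + s / l ^+ 2 <= 2 / l + (s - l) ^+ 2 / (l ^+ 3 * delta).
Proof.
move=> l_gt0 delta_gt0 s_ge.
have s_gt0 : 0 < s by apply: lt_le_trans s_ge; exact: mulr_gt0.
have -> : s^-1 + s / l ^+ 2 = 2 / l + (s - l) ^+ 2 / (l ^+ 2 * s).
  by field; rewrite !gt_eqF.
rewrite lerD2l ler_wpM2l ?sqr_ge0 // lef_pV2 ?posrE ?mulr_gt0 ?exprn_gt0 //.
by rewrite exprSr -mulrA ler_wpM2l // exprn_ge0 // ltW.
Qed.

Section moments_of_sqnorm.
Context (R : realType) (d : measure_display) (T : measurableType d).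
Variables (P : probability T R) (L : nat) (X : T -> R[i]) (x : 'I_L -> T -> R[i]).
Hypotheses (mX : cmeasurable X) (mx : forall l, cmeasurable (x l)).
Hypothesis indep : mutually_independent P x.
Hypothesis x_distr : forall l, same_distribution P (x l) X.
Local Open Scope ereal_scope.
Variable v : R.
Hypothesis EX2 : \int[P]_t (ComplexField.Normc.normc (X t) ^+ 2)%:E = 1.
Hypothesis VX2 :
  \int[P]_t ((ComplexField.Normc.normc (X t) ^+ 2 - 1) ^+ 2)%:E = v%:E.

Let Y l t := (ComplexField.Normc.normc (x l t) ^+ 2)%R.

Let mY l : measurable_fun setT (Y l). Proof. exact: measurable_normc_sqr. Qed.

Let Y0 l t : (0 <= Y l t)%R. Proof. exact: sqr_ge0. Qed.

Lemma integral_normc_sqr l : \int[P]_t (Y l t)%:E = 1.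
Proof.
rewrite -EX2; exact: (same_distribution_integral_normc_sqr (mx l) mX (x_distr l)
  (@measurable_id _ _ setT)).
Qed.

Lemma integral_normc_sqr_sqr l : \int[P]_t (Y l t ^+ 2)%:E = (v + 1)%:E.
Proof.
have mX2 := measurable_normc_sqr mX.
rewrite (same_distribution_integral_normc_sqr (mx l) mX (x_distr l)
  (exprn_measurable 2) (fun r _ => sqr_ge0 r)).
by rewrite (ge0_integral_sqr_centered mX2 (fun t => sqr_ge0 _) ler01 EX2) VX2 expr1n.
Qed.

Lemma integral_normc_sqr_mul i j : i != j ->
  \int[P]_t (Y i t * Y j t)%:E = 1.
Proof.
move=> ij; rewrite (integral_normc_sqr_indep mx indep ij).
by rewrite !integral_normc_sqr mule1.
Qed.

Lemma integral_sqnorm : \int[P]_t (sqnorm x t)%:E = L%:R%:E.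
Proof.
rewrite ge0_integral_sum_EFin //.
under eq_bigr do rewrite integral_normc_sqr.
by rewrite sumEFin sumr_const card_ord.
Qed.

Lemma integral_sqnorm_sqr :
  \int[P]_t (sqnorm x t ^+ 2)%:E = (L%:R ^+ 2 + L%:R * v)%:E.
Proof.
have mYY i j : measurable_fun setT (fun t => Y i t * Y j t)%R by exact: measurable_funM.
have YY0 i j t : (0 <= Y i t * Y j t)%R by exact: mulr_ge0.
have sqnorm_sqr t : (sqnorm x t ^+ 2 = \sum_(i < L) \sum_(j < L) Y i t * Y j t)%R.
  by rewrite expr2 /sqnorm mulr_suml; apply: eq_bigr => i _; rewrite mulr_sumr.
under eq_integral do rewrite sqnorm_sqr.
rewrite ge0_integral_sum_EFin => [|i|i t]; first last.
- exact: sumr_ge0.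
- exact: measurable_sum.
have row i : \int[P]_t (\sum_(j < L) Y i t * Y j t)%:E = (L%:R + v)%:E.
  rewrite ge0_integral_sum_EFin // (bigD1 i) //=.
  under eq_bigr => j ij do rewrite integral_normc_sqr_mul 1?eq_sym //.
  under eq_integral do rewrite -expr2.
  rewrite integral_normc_sqr_sqr (eq_bigr (fun=> 1%:E)) // sumEFin sumr_const.
  have L_gt0 : (0 < L)%N by exact: leq_ltn_trans (leq0n i) (ltn_ord i).
  rewrite cardC1 card_ord -EFinD -[in RHS](prednK L_gt0) -natr1.
  by congr EFin; ring.
under eq_bigr do rewrite row.
rewrite sumEFin sumr_const card_ord; congr EFin.
by rewrite -mulr_natl; ring.
Qed.

Lemma integral_sqnorm_centered :
  \int[P]_t ((sqnorm x t - L%:R) ^+ 2)%:E = (L%:R * v)%:E.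
Proof.
have m_sqnorm := measurable_sqnorm mx.
have := ge0_integral_sqr_centered m_sqnorm (@sqnorm_ge0 _ _ _ x) (ler0n _ L) integral_sqnorm.
rewrite integral_sqnorm_sqr => /(congr1 (fun e => e - (L%:R ^+ 2)%:E)).
rewrite addeK // => <-; rewrite -EFinB; congr EFin; ring.
Qed.

Variable delta : R.
Hypotheses (L_gt0 : (0 < L)%N) (delta_gt0 : (0 < delta)%R).
Hypothesis x_ge_delta :
  forall l, {ae P, forall t, (delta <= ComplexField.Normc.normc (x l t) ^+ 2)%R}.

Let l_gt0 : (0 < L%:R :> R)%R. Proof. by rewrite ltr0n. Qed.

Lemma ae_sqnorm_ge : {ae P, forall t, L%:R * delta <= sqnorm x t}%R.
Proof.
apply: filterS (filter_forall _ x_ge_delta) => t /= x_ge.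
by rewrite mulr_natl -[in leLHS](card_ord L) -sumr_const; exact: ler_sum.
Qed.

Lemma integral_sqnorm_div : \int[P]_t (sqnorm x t / L%:R ^+ 2)%:E = (L%:R^-1)%:E.
Proof.
under eq_integral do rewrite mulrC.
rewrite ge0_integralZl_EFinM ?invr_ge0 ?exprn_ge0 //;
  [|exact: measurable_sqnorm|exact: sqnorm_ge0].
by rewrite integral_sqnorm -EFinM; congr EFin; field; rewrite gt_eqF.
Qed.

Let rem t := ((sqnorm x t - L%:R) ^+ 2 / (L%:R ^+ 3 * delta))%R.

Let m_sqr : measurable_fun setT (fun t => (sqnorm x t - L%:R) ^+ 2)%R.
Proof.
by apply/measurable_funX/measurable_funB; [exact: measurable_sqnorm|exact: measurable_cst].
Qed.

Let m_rem : measurable_fun setT rem.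
Proof. by apply: measurable_funM => //; exact: measurable_cst. Qed.

Let rem0 t : (0 <= rem t)%R.
Proof. by rewrite divr_ge0 ?sqr_ge0 // mulr_ge0 // ltW. Qed.

Let two_div0 : (0 <= 2 / L%:R :> R)%R.
Proof. by rewrite divr_ge0 // ltW. Qed.

Lemma integral_sqnorm_quadratic_bound :
  \int[P]_t (2 / L%:R + rem t)%:E = (2 / L%:R + v / (L%:R ^+ 2 * delta))%:E.
Proof.
rewrite (ge0_integralD_EFin P (measurable_cst _) m_rem (fun=> two_div0) rem0).
have coef0 : (0 <= (L%:R ^+ 3 * delta)^-1)%R by rewrite invr_ge0 mulr_ge0 // ltW.
under [X in _ + X]eq_integral do rewrite /rem mulrC.
rewrite integral_cst_probability ge0_integralZl_EFinM //; last by move=> t; exact: sqr_ge0.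
rewrite integral_sqnorm_centered -EFinM -EFinD.
by congr EFin; field; rewrite !gt_eqF.
Qed.

Lemma integral_inv_sqnorm_le :
  \int[P]_t ((sqnorm x t)^-1)%:E <= (L%:R^-1 + v / (L%:R ^+ 2 * delta))%:E.
Proof.
suff : \int[P]_t ((sqnorm x t)^-1)%:E + (L%:R^-1)%:E <=
       (L%:R^-1 + v / (L%:R ^+ 2 * delta))%:E + (L%:R^-1)%:E by rewrite leeD2rE.
have inv0 t : (0 <= (sqnorm x t)^-1)%R by rewrite invr_ge0 sqnorm_ge0.
have div0 t : (0 <= sqnorm x t / L%:R ^+ 2)%R.
  by rewrite divr_ge0 ?sqnorm_ge0 // exprn_ge0 // ltW.
have m_div : measurable_fun setT (fun t => sqnorm x t / L%:R ^+ 2)%R.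
  by apply: measurable_funM; [exact: measurable_sqnorm|exact: measurable_cst].
rewrite -[in leLHS]integral_sqnorm_div.
rewrite -ge0_integralD_EFin //; last exact: measurable_inv_sqnorm.
apply: le_trans (_ : _ <= \int[P]_t (2 / L%:R + rem t)%:E) _.
  apply: ae_ge0_le_integral => //.
  - by move=> t _; rewrite lee_fin addr_ge0.
  - by apply/measurable_EFinP/measurable_funD => //; exact: measurable_inv_sqnorm.
  - by move=> t _; rewrite lee_fin addr_ge0.
  - by apply/measurable_EFinP/measurable_funD => //; exact: measurable_cst.
  - apply: filterS ae_sqnorm_ge => t s_ge _; rewrite lee_fin.
    exact: invf_add_div_sqr_le.
rewrite integral_sqnorm_quadratic_bound lee_fin.
rewrite [leRHS](_ : _ = 2 / L%:R + v / (L%:R ^+ 2 * delta))%R //.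
by field; rewrite !gt_eqF.
Qed.

End moments_of_sqnorm.

Theorem lemma2 (R : realType) (d : measure_display) (T : measurableType d)
  (P : probability T R) (L : nat) (X : T -> R[i]) (x : 'I_L -> T -> R[i])
  (delta Pw sigma2 : R) :
  (1 <= L)%N ->
  cmeasurable X -> (forall l, cmeasurable (x l)) ->
  mutually_independent P x ->
  (forall l, same_distribution P (x l) X) ->
  P.-integrable setT (fun t => ((ComplexField.Normc.normc (X t) ^+ 2)%R)%:E) ->
  expectation P (fun t => ComplexField.Normc.normc (X t) ^+ 2) = 1%E ->
  0 < delta ->
  (forall l, {ae P, forall t, (delta <= ComplexField.Normc.normc (x l t) ^+ 2)%R}) ->
  0 < Pw -> 0 < sigma2 ->
  (avg_crb P Pw sigma2 x
   <= (sigma2 / Pw)%:E *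
      ((L%:R)^-1%:E + variance P (fun t => (ComplexField.Normc.normc (X t) ^+ 2)%R) * ((L%:R ^+ 2 * delta)^-1)%:E))%E.
Proof.
move=> L_ge1 mX mx indep x_distr _ EX2 delta_gt0 x_ge_delta Pw_gt0 sigma2_gt0.
have EX2' : (\int[P]_t (ComplexField.Normc.normc (X t) ^+ 2)%:E = 1)%E.
  by rewrite -EX2 unlock.
rewrite (variance_integral EX2).
have VX2_ge0 : (0 <= \int[P]_t ((ComplexField.Normc.normc (X t) ^+ 2 - 1) ^+ 2)%:E)%E.
  by apply: integral_ge0 => t _; rewrite lee_fin sqr_ge0.
case VX2 : (\int[P]_t ((ComplexField.Normc.normc (X t) ^+ 2 - 1) ^+ 2)%:E)%E
  => [v||]; last by rewrite VX2 in VX2_ge0.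
- rewrite /avg_crb unlock /crb_cond.
  under eq_integral do rewrite invfM mulrA.
  have m_inv := measurable_inv_sqnorm mx.
  have ratio0 : 0 <= sigma2 / Pw by rewrite divr_ge0 // ltW.
  have inv0 t : 0 <= (sqnorm x t)^-1 by rewrite invr_ge0 sqnorm_ge0.
  rewrite ge0_integralZl_EFinM //; apply: lee_wpmul2l; first by rewrite lee_fin.
  rewrite -EFinM -EFinD.
  exact: (integral_inv_sqnorm_le mX mx indep x_distr EX2' VX2 L_ge1 delta_gt0 x_ge_delta).
- rewrite [(+oo * _)%E]muleC gt0_muley ?lte_fin ?invr_gt0 ?mulr_gt0 ?exprn_gt0 ?ltr0n //.
  by rewrite addey // gt0_muley ?leey // lte_fin divr_gt0.
Qed.
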